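(* Let $P$ be a finite set of points in $\mathbb{R}^2$ in general position and let $(t,u,v)$ be consecutive vertices of the first convex layer $L^1$ of $P$. If $u$ is deleted from $P$, then among the vertices of $L^1$ (other than $u$), only the sensitivities of $t$ and $v$ change.
   Context: $L^1$ is the set of vertices of the convex hull of $P$. The sensitivity of a point $p\in P$ is the amount by which the area of the convex hull of $P$ decreases when $p$ is removed from $P$. *)

From HB Require Import structures.
From mathcomp Require Import all_boot all_order all_algebra.
From mathcomp Require Import finmap.
From mathcomp Require Import all_classical all_reals all_analysis.
Set Implicit Arguments. Unset Strict Implicit. Unset Printing Implicit Defensive.
Import Order.TTheory GRing.Theory Num.Theory.
Local Open Scope classical_set_scope.
Local Open Scope ring_scope.


Section Geometry.
Variable R : realType.

Definition pt := (R * R)%type.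

(* twice the signed area of the triangle a b c (orientation determinant) *)
Definition orient (a b c : pt) : R :=
  (b.1 - a.1) * (c.2 - a.2) - (b.2 - a.2) * (c.1 - a.1).

Definition general_position (P : {fset pt}) : Prop :=
  forall a b c, a \in P -> b \in P -> c \in P ->
    a != b -> b != c -> a != c -> orient a b c != 0.

Definition conv_hull (P : {fset pt}) : set pt :=
  [set x | exists w : pt -> R,
     (forall p, p \in P -> 0 <= w p) /\
     \sum_(p <- P) w p = 1 /\
     x = (\sum_(p <- P) w p * p.1, \sum_(p <- P) w p * p.2)].

Definition extreme_point (S : set pt) (x : pt) : Prop :=
  S x /\ forall y z (l : R), S y -> S z -> 0 < l -> l < 1 ->
    x = (l * y.1 + (1 - l) * z.1, l * y.2 + (1 - l) * z.2) -> y = z.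

Definition L1 (P : {fset pt}) : set pt := extreme_point (conv_hull P).

Definition hull_edge (P : {fset pt}) (a b : pt) : Prop :=
  L1 P a /\ L1 P b /\ a != b /\
  ((forall p, p \in P -> 0 <= orient a b p) \/
   (forall p, p \in P -> orient a b p <= 0)).

Definition consecutive_vertices (P : {fset pt}) (t u v : pt) : Prop :=
  hull_edge P t u /\ hull_edge P u v /\ t != v.

Definition area (S : set pt) : R :=
  fine ((@lebesgue_measure R \x @lebesgue_measure R) S)%E.

Definition hull_area (P : {fset pt}) : R := area (conv_hull P).

Definition sensitivity (P : {fset pt}) (p : pt) : R :=
  hull_area P - hull_area (P `\ p)%fset.

End Geometry.

From HB Require Import structures.
From mathcomp Require Import all_boot all_order all_algebra.
From mathcomp Require Import finmap.
From mathcomp Require Import all_classical all_reals all_analysis.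
From mathcomp Require Import ring lra measurable_realfun.
Set Implicit Arguments. Unset Strict Implicit. Unset Printing Implicit Defensive.
Import Order.TTheory GRing.Theory Num.Theory.
Local Open Scope classical_set_scope.
Local Open Scope ring_scope.

(* Let D = orient t u v.  As t u and u v are hull edges, P lies in the wedge
   {p | 0 <= D * orient t u p, 0 <= D * orient u v p}, and the vertex w, which is
   not a vertex of the triangle t u v, cannot lie in it: w is strictly beyond the
   chord t v, on the side opposite to u.  Let G be the closed half-plane bounded by
   the line t v that contains w.  For Q in the wedge containing t and v, a point
   of conv Q on the far side of that line from some q in Q is already in
   conv (Q \ q): sliding it away from q it meets the line on the segment [t, v].
   So conv Q inside G does not see u and conv Q outside G does not see w, for
   Q = P, P \ u and P \ w.  Splitting areas along G, the sensitivity of w is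
   area (conv P inside G) - area (conv (P \ w) inside G) whether or not u has
   been deleted.  Hulls are measurable of finite area by Caratheodory's theorem:
   they are finite unions of triangles, segments and points. *)

Section ConvexHull.
Variable R : realType.
Implicit Types (Q S : {fset pt R}) (a b c p q x y z : pt R) (f : pt R -> R).

Definition comb (l : R) x y : pt R :=
  (l * x.1 + (1 - l) * y.1, l * x.2 + (1 - l) * y.2).

Definition bary Q (w : pt R -> R) : pt R :=
  (\sum_(p <- Q) w p * p.1, \sum_(p <- Q) w p * p.2).

Definition affine f := exists c0 c1 c2 : R, forall x, f x = c0 + c1 * x.1 + c2 * x.2.

Lemma combxx l x : comb l x x = x.
Proof. by case: x => x1 x2; rewrite /comb /=; congr (_, _); ring. Qed.

Lemma comb0 x y : comb 0 x y = y.
Proof. by case: y => y1 y2; rewrite /comb /=; congr (_, _); ring. Qed.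

Lemma comb1 x y : comb 1 x y = x.
Proof. by case: x => x1 x2; rewrite /comb /=; congr (_, _); ring. Qed.

Lemma comb_comb l m x y : comb l (comb m x y) y = comb (l * m) x y.
Proof. by rewrite /comb /=; congr (_, _); ring. Qed.

Lemma affine_cst (k : R) : affine (fun=> k).
Proof. by exists k, 0, 0 => x; ring. Qed.

Lemma affine_fst : affine (@fst R R).
Proof. by exists 0, 1, 0 => x; ring. Qed.

Lemma affine_snd : affine (@snd R R).
Proof. by exists 0, 0, 1 => x; ring. Qed.

Lemma affine_form (c0 c1 c2 : R) : affine (fun x : pt R => c0 + c1 * x.1 + c2 * x.2).
Proof. by exists c0, c1, c2. Qed.

Lemma affine_orient a b : affine (orient a b).
Proof.
exists ((b.2 - a.2) * a.1 - (b.1 - a.1) * a.2), (a.2 - b.2), (b.1 - a.1).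
by move=> x; rewrite /orient; ring.
Qed.

Lemma affineZ k f : affine f -> affine (fun x => k * f x).
Proof.
by move=> [c0 [c1 [c2 E]]]; exists (k * c0), (k * c1), (k * c2) => x; rewrite E; ring.
Qed.

Lemma affine_comb f l x y : affine f -> f (comb l x y) = l * f x + (1 - l) * f y.
Proof. by move=> [c0 [c1 [c2 E]]]; rewrite !E /=; ring. Qed.

Lemma affine_bary f Q w : affine f -> \sum_(p <- Q) w p = 1 ->
  f (bary Q w) = \sum_(p <- Q) w p * f p.
Proof.
move=> [c0 [c1 [c2 E]]] w1; under [RHS]eq_bigr do rewrite E.
have -> : \sum_(p <- Q) w p * (c0 + c1 * p.1 + c2 * p.2) =
    c0 * \sum_(p <- Q) w p + c1 * (bary Q w).1 + c2 * (bary Q w).2.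
  rewrite /bary /= !mulr_sumr -!big_split; by apply: eq_bigr => p _ /=; ring.
by rewrite E w1 mulr1.
Qed.

Lemma conv_hull_affine_ge0 f Q x : affine f -> {in Q, forall p, 0 <= f p} ->
  conv_hull Q x -> 0 <= f x.
Proof.
move=> af fQ [w [w0 [w1 ->]]]; rewrite (affine_bary af w1) big_seq.
by apply: sumr_ge0 => p pQ; apply: mulr_ge0; [exact: w0 | exact: fQ].
Qed.

Lemma sum_indicator Q a (F : pt R -> R) : a \in Q ->
  \sum_(p <- Q) (p == a)%:R * F p = F a.
Proof.
move=> aQ; rewrite (big_fsetD1 a aQ) /= eqxx mul1r big1_fset ?addr0 // => p.
by rewrite !inE => /andP[/negPf -> _] _; rewrite mul0r.
Qed.

Lemma conv_hull_mem Q p : p \in Q -> conv_hull Q p.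
Proof.
move=> pQ; exists (fun x => (x == p)%:R); split; first by move=> x _; rewrite ler0n.
split; last by rewrite !sum_indicator //; case: p {pQ}.
by rewrite -[RHS](sum_indicator (fun=> 1) pQ); apply: eq_bigr => x _; rewrite mulr1.
Qed.

Lemma conv_hull_comb Q l x y : 0 <= l <= 1 -> conv_hull Q x -> conv_hull Q y ->
  conv_hull Q (comb l x y).
Proof.
move=> /andP[l0 l1] [a [a0 [a1 ->]]] [b [b0 [b1 ->]]].
exists (fun p => l * a p + (1 - l) * b p); split.
  move=> p pQ; apply: addr_ge0; apply: mulr_ge0 => //; [exact: a0|lra|exact: b0].
split; first by rewrite big_split /= -!mulr_sumr a1 b1; ring.
rewrite /comb /=; congr (_, _); rewrite !mulr_sumr -big_split /=;
  apply: eq_bigr => p _; ring.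
Qed.

Lemma conv_hull_sub Q S : (S `<=` Q)%fset -> conv_hull S `<=` conv_hull Q.
Proof.
move=> SQ _ [a [a0 [a1 ->]]].
pose b p := if p \in S then a p else 0.
have E (F : pt R -> R) : \sum_(p <- Q) b p * F p = \sum_(p <- S) a p * F p.
  rewrite -(big_fset_incl _ SQ) => [|p _ /negPf]; last by rewrite /b => ->; rewrite mul0r.
  by rewrite !big_seq; apply: eq_bigr => p; rewrite /b => ->.
exists b; split; first by move=> p _; rewrite /b; case: ifP => // /a0.
split; last by rewrite !E.
rewrite -a1 (eq_bigr (fun p => b p * 1)) => [|p _]; last by rewrite mulr1.
by rewrite E; apply: eq_bigr => p _; rewrite mulr1.
Qed.

Lemma general_position_sub Q S : (S `<=` Q)%fset ->
  general_position Q -> general_position S.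
Proof. by move=> /fsubsetP SQ gp a b c /SQ aQ /SQ bQ /SQ cQ; apply: gp. Qed.

Section Weights.
Variables (Q : {fset pt R}) (w : pt R -> R).
Hypotheses (w_ge0 : {in Q, forall p, 0 <= w p}) (w_sum1 : \sum_(p <- Q) w p = 1).

Lemma weight_le1 q : q \in Q -> w q <= 1.
Proof.
move=> qQ; rewrite -w_sum1 (big_fsetD1 q qQ) /= lerDl big_seq sumr_ge0 // => p.
by rewrite !inE => /andP[_ /w_ge0].
Qed.

Lemma bary_weight1 q : q \in Q -> w q = 1 -> bary Q w = q.
Proof.
move=> qQ wq1.
have S0 : \sum_(p <- (Q `\ q)%fset) w p = 0.
  by move: w_sum1; rewrite (big_fsetD1 q qQ) /= wq1; lra.
have w0 : {in (Q `\ q)%fset, forall p, w p = 0}.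
  move=> p pQ; move/eqP: S0; rewrite big_seq psumr_eq0 => [/allP/(_ p pQ)|].
    by rewrite pQ => /eqP.
  by move=> r /[!inE] /andP[_ /w_ge0].
rewrite /bary !(big_fsetD1 q qQ) /= !big_seq !big1 => [|p /w0 ->|p /w0 ->];
  rewrite ?mul0r // wq1 !mul1r !addr0; by case: q {qQ wq1 w0 S0}.
Qed.

Lemma bary_fsetD1 q : q \in Q -> bary Q w = q \/
  exists2 y, conv_hull (Q `\ q)%fset y & w q < 1 /\ bary Q w = comb (w q) q y.
Proof.
move=> qQ; have [wq1|wq1] := eqVneq (w q) 1; first by left; apply: bary_weight1.
have {}wq1 : w q < 1 by rewrite lt_neqAle wq1 (weight_le1 qQ).
right; set k := 1 - w q; have k0 : k != 0 by rewrite subr_eq0 gt_eqF.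
have sumD1 : \sum_(p <- (Q `\ q)%fset) w p = k.
  by rewrite /k -w_sum1 (big_fsetD1 q qQ) /=; ring.
exists (bary (Q `\ q)%fset (fun p => w p / k)).
  exists (fun p => w p / k); split.
    by move=> p /[!inE] /andP[_ /w_ge0 ?]; apply: divr_ge0; rewrite // /k; lra.
  by split; rewrite // -mulr_suml sumD1 divff.
split => //; rewrite /bary /comb !(big_fsetD1 q qQ) /= -/k !mulr_sumr; congr (_, _);
  by congr (_ + _); apply: eq_bigr => p _; field.
Qed.

End Weights.

Lemma L1_mem Q x : L1 Q x -> x \in Q.
Proof.
move=> [[w [w0 [w1 Ex]]] ext]; rewrite -/(bary Q w) in Ex.
have [/hasP[q qQ wq0] | /hasPn wQ] := boolP (has (fun p => 0 < w p) Q); last first.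
  have : \sum_(p <- Q) w p <= 0 by rewrite big_seq sumr_le0 // => p /wQ; rewrite leNgt.
  by rewrite w1 ler10.
have [xq | [y yQ [wq1 Exy]]] := bary_fsetD1 w0 w1 qQ; first by rewrite Ex xq.
rewrite -Ex in Exy.
have yq : q = y.
  apply: (ext q y (w q)) => //; first exact: conv_hull_mem.
  exact: conv_hull_sub (fsubsetDl Q _) _ yQ.
by rewrite Exy -yq combxx.
Qed.

End ConvexHull.

Section Triangles.
Variable R : realType.
Implicit Types (Q : {fset pt R}) (a b c t u v w x y z : pt R).

Lemma mulrr_gt0 (r : R) : r != 0 -> 0 < r * r.
Proof. by move=> r0; rewrite -expr2 exprn_even_gt0 //= r0. Qed.

Lemma orient_cycle a b c : orient b c a = orient a b c.
Proof. by rewrite /orient; ring. Qed.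

Lemma orientNC a b c : orient b a c = - orient a b c.
Proof. by rewrite /orient; ring. Qed.

Lemma orient_xyx a b : orient a b a = 0.
Proof. by rewrite /orient; ring. Qed.

Lemma orient_xyy a b : orient a b b = 0.
Proof. by rewrite /orient; ring. Qed.

Lemma orient_sum a b c x : orient b c x + orient c a x + orient a b x = orient a b c.
Proof. by rewrite /orient; ring. Qed.

Lemma orient_barycentric a b c x : orient a b c != 0 ->
  x = ((orient b c x * a.1 + orient c a x * b.1 + orient a b x * c.1) / orient a b c,
       (orient b c x * a.2 + orient c a x * b.2 + orient a b x * c.2) / orient a b c).
Proof. by case: x => x1 x2; rewrite /orient /= => D0; congr (_, _); field. Qed.

Definition tri a b c : set (pt R) := [set x | exists al be ga : R,
  [/\ 0 <= al, 0 <= be, 0 <= ga, al + be + ga = 1 &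
      x = (al * a.1 + be * b.1 + ga * c.1, al * a.2 + be * b.2 + ga * c.2)]].

Lemma tri_orientP a b c x : orient a b c != 0 ->
  tri a b c x <-> [/\ 0 <= orient a b c * orient b c x,
                      0 <= orient a b c * orient c a x &
                      0 <= orient a b c * orient a b x].
Proof.
set D := orient a b c => D0; have DD : 0 < D * D by exact: mulrr_gt0.
split=> [[al [be [ga [al0 be0 ga0 s1 Ex]]]] | [ha hb hc]].
  have ga1 : ga = 1 - al - be by lra.
  have [-> -> ->] : [/\ orient b c x = al * D, orient c a x = be * D &
      orient a b x = ga * D] by rewrite Ex ga1 /D /orient; split => /=; ring.
  by split; rewrite mulrCA mulr_ge0 // ltW.
have coord0 o : 0 <= D * o -> 0 <= o / D.
  move=> Do; have -> : o / D = D * o / (D * D) by field.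
  by rewrite divr_ge0 // ltW.
exists (orient b c x / D), (orient c a x / D), (orient a b x / D); split; rewrite ?coord0 //.
  by rewrite -!mulrDl orient_sum divff.
by rewrite [LHS](orient_barycentric x D0) -/D; congr (_, _); field.
Qed.

Lemma tri_comb a b c x : tri a b c x ->
  exists l m, [/\ 0 <= l <= 1, 0 <= m <= 1 & x = comb l (comb m a b) c].
Proof.
move=> [al [be [ga [al0 be0 ga0 s1 ->]]]].
have [ab0|ab0] := eqVneq (al + be) 0.
  exists 0, 0; rewrite comb0 lexx ler01; split => //.
  have [-> ->] : al = 0 /\ be = 0 by split; lra.
  have -> : ga = 1 by lra.
  by rewrite !mul0r !add0r !mul1r; case: c.
exists (al + be), (al / (al + be)); split; first (apply/andP; split; lra).
  by rewrite divr_ge0 ?addr_ge0 //= ler_pdivrMr ?mul1r; lra.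
rewrite /comb /=; have -> : ga = 1 - (al + be) by lra.
by congr (_, _); field.
Qed.

Lemma tri_sub_conv_hull Q a b c : a \in Q -> b \in Q -> c \in Q ->
  tri a b c `<=` conv_hull Q.
Proof.
move=> aQ bQ cQ x /tri_comb [l [m [l01 m01 ->]]].
apply: conv_hull_comb l01 _ (conv_hull_mem cQ).
exact: conv_hull_comb m01 (conv_hull_mem aQ) (conv_hull_mem bQ).
Qed.

Lemma extreme_point_comb (S : set (pt R)) x l y z : extreme_point S x ->
  S y -> S z -> 0 <= l <= 1 -> x = comb l y z -> x = y \/ x = z.
Proof.
move=> [_ ext] Sy Sz /andP[l0 l1] Ex.
have [l00|l0'] := eqVneq l 0; first by right; rewrite Ex l00 comb0.
have [l11|l1'] := eqVneq l 1; first by left; rewrite Ex l11 comb1.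
have yz : y = z by apply: (ext y z l) => //; rewrite lt_neqAle ?l0 ?l1 ?andbT // eq_sym.
by left; rewrite Ex -yz combxx.
Qed.

Lemma L1_tri Q a b c x : a \in Q -> b \in Q -> c \in Q ->
  L1 Q x -> tri a b c x -> [\/ x = a, x = b | x = c].
Proof.
move=> aQ bQ cQ Lx /tri_comb [l [m [l01 m01 Ex]]].
have abQ := conv_hull_comb m01 (conv_hull_mem aQ) (conv_hull_mem bQ).
have [xab|] := extreme_point_comb Lx abQ (conv_hull_mem cQ) l01 Ex; last by constructor 3.
have [] := extreme_point_comb Lx (conv_hull_mem aQ) (conv_hull_mem bQ) m01 xab;
  by [constructor 1 | constructor 2].
Qed.

Lemma wedge_chord t u v z : orient t u v != 0 ->
  0 <= orient t u v * orient t u z -> 0 <= orient t u v * orient u v z ->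
  orient t v z = 0 -> exists2 l, 0 <= l <= 1 & z = comb l t v.
Proof.
set D := orient t u v => D0 tuz uvz tvz.
have DD : 0 < D * D by exact: mulrr_gt0.
have sumD : orient u v z + orient t u z = D.
  by rewrite /D -(orient_sum t u v z) (orientNC t v) tvz; ring.
exists (orient u v z / D).
  have -> : orient u v z / D = D * orient u v z / (D * D) by field.
  by rewrite divr_ge0 ?ler_pdivrMr ?(ltW DD) //= mul1r; nra.
rewrite [LHS](orient_barycentric z D0) (orientNC t v) tvz /comb; congr (_, _);
  rewrite -/D -sumD; field; by rewrite sumD.
Qed.

Lemma hull_edge_wedge P a b c : hull_edge P a b -> c \in P -> orient a b c != 0 ->
  {in P, forall p, 0 <= orient a b c * orient a b p}.
Proof.
move=> [_ [_ [_ [side|side]]]] cP abc p pP.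
  have abc0 : 0 < orient a b c by rewrite lt_neqAle eq_sym abc side.
  by apply: mulr_ge0; [exact: ltW | exact: side].
have abc0 : orient a b c < 0 by rewrite lt_neqAle abc side.
by apply: mulr_le0; [exact: ltW | exact: side].
Qed.

Lemma beyond_chord_of_not_tri t u v w : orient t u v != 0 ->
  0 <= orient t u v * orient t u w -> 0 <= orient t u v * orient u v w ->
  ~ tri t u v w -> 0 < orient t u v * orient t v w.
Proof.
move=> tuv tuw uvw ntri; rewrite ltNge; apply/negP => tvw; apply: ntri.
by apply/tri_orientP => //; split; rewrite // (orientNC t v) mulrN oppr_ge0.
Qed.

End Triangles.

Section Chord.
Variable R : realType.
Implicit Types (Q : {fset pt R}) (q x : pt R) (f : pt R -> R).

Lemma conv_hull_fsetD1_halfplane Q q f x : affine f -> 0 < f q -> f x <= 0 ->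
  (forall z, conv_hull Q z -> f z = 0 -> conv_hull (Q `\ q)%fset z) ->
  conv_hull Q x -> conv_hull (Q `\ q)%fset x.
Proof.
move=> af fq fx keep_line; have [qQ|qQ] := boolP (q \in Q); last by rewrite mem_fsetD1.
(* x = l q + (1 - l) y with y in conv (Q \ q); the point z of [q, y] on the
   line f = 0 is kept, and x lies on [z, y]. *)
move=> [w [w0 [w1 Ex]]]; rewrite -/(bary Q w) in Ex.
have [xq | [y yQ [wq1 Exy]]] := bary_fsetD1 w0 w1 qQ.
  by move: fx; rewrite Ex xq; lra.
rewrite -Ex in Exy.
set l := w q in wq1 Exy; have l0 : 0 <= l := w0 q qQ.
have fxE : f x = l * f q + (1 - l) * f y by rewrite Exy affine_comb.
have [fy|fy] := leP 0 (f y).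
  have l00 : l = 0 by nra.
  by rewrite Exy l00 comb0.
set s := - f y / (f q - f y).
have s0 : 0 < s by apply: divr_gt0; lra.
have s1 : s <= 1 by rewrite ler_pdivrMr; lra.
have ls : l <= s by rewrite ler_pdivlMr; lra.
have zQ : conv_hull Q (comb s q y).
  apply: conv_hull_comb; first by rewrite (ltW s0).
    exact: conv_hull_mem.
  exact: conv_hull_sub (fsubsetDl Q _) _ yQ.
have fz : f (comb s q y) = 0 by rewrite affine_comb /s //; field; lra.
have -> : x = comb (l / s) (comb s q y) y by rewrite comb_comb divfK ?gt_eqF.
apply: conv_hull_comb (keep_line _ zQ fz) yQ.
by rewrite divr_ge0 ?(ltW s0) // ler_pdivrMr // mul1r.
Qed.

Section Wedge.
Variables (t u v : pt R) (Q : {fset pt R}).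
Hypotheses (tuv : orient t u v != 0) (tQ : t \in Q) (vQ : v \in Q).
Hypothesis wedge_tu : {in Q, forall p, 0 <= orient t u v * orient t u p}.
Hypothesis wedge_uv : {in Q, forall p, 0 <= orient t u v * orient u v p}.

Lemma conv_hull_fsetD1_beyond_chord q k x :
  0 < k * orient t v q -> k * orient t v x <= 0 ->
  conv_hull Q x -> conv_hull (Q `\ q)%fset x.
Proof.
move=> kq kx; have af := affineZ k (affine_orient t v).
apply: (conv_hull_fsetD1_halfplane af kq kx) => z zQ /eqP.
rewrite mulf_eq0 => /orP[/eqP k0|/eqP tvz]; first by move: kq; rewrite k0 mul0r ltxx.
have [l l01 ->] := wedge_chord tuv
  (conv_hull_affine_ge0 (affineZ _ (affine_orient t u)) wedge_tu zQ)
  (conv_hull_affine_ge0 (affineZ _ (affine_orient u v)) wedge_uv zQ) tvz.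
have keep p : p \in Q -> orient t v p = 0 -> p \in (Q `\ q)%fset.
  move=> pQ tvp; rewrite in_fsetD1 pQ andbT.
  by apply: contraTneq kq => <-; rewrite tvp mulr0 ltxx.
apply: conv_hull_comb l01 (conv_hull_mem (keep _ tQ _)) (conv_hull_mem (keep _ vQ _)).
  exact: orient_xyx.
exact: orient_xyy.
Qed.

Lemma conv_hull_fsetD1_beyond_chordE q k (H : set (pt R)) :
  0 < k * orient t v q -> H `<=` [set x | k * orient t v x <= 0] ->
  conv_hull Q `&` H = conv_hull (Q `\ q)%fset `&` H.
Proof.
move=> kq Hk; apply/seteqP; split=> x [xQ Hx]; split=> //.
  exact: conv_hull_fsetD1_beyond_chord kq (Hk x Hx) xQ.
exact: conv_hull_sub (fsubsetDl Q _) _ xQ.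
Qed.

End Wedge.

End Chord.

Section ConsecutiveVertices.
Variables (R : realType) (P : {fset pt R}) (t u v : pt R).
Hypotheses (gp : general_position P) (tuv : consecutive_vertices P t u v).

Lemma consecutive_mem : [/\ t \in P, u \in P & v \in P].
Proof. by case: tuv => [[Lt [Lu _]] [[_ [Lv _]] _]]; rewrite !L1_mem. Qed.

Lemma consecutive_orient_neq0 : orient t u v != 0.
Proof.
have [tP uP vP] := consecutive_mem.
by case: tuv => [[_ [_ [tu _]]] [[_ [_ [uv _]]] tv]]; apply: gp.
Qed.

Lemma consecutive_wedge_tu : {in P, forall p, 0 <= orient t u v * orient t u p}.
Proof.
have [_ _ vP] := consecutive_mem; case: tuv => edge_tu _.
exact: hull_edge_wedge edge_tu vP consecutive_orient_neq0.
Qed.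

Lemma consecutive_wedge_uv : {in P, forall p, 0 <= orient t u v * orient u v p}.
Proof.
have [tP _ _] := consecutive_mem; case: tuv => _ [edge_uv _].
rewrite -(orient_cycle t); apply: hull_edge_wedge edge_uv tP _.
by rewrite orient_cycle consecutive_orient_neq0.
Qed.

Lemma consecutive_conv_hull_fsetD1 Q q k (H : set (pt R)) :
  (Q `<=` P)%fset -> t \in Q -> v \in Q ->
  0 < k * orient t v q -> H `<=` [set x | k * orient t v x <= 0] ->
  conv_hull Q `&` H = conv_hull (Q `\ q)%fset `&` H.
Proof.
move=> /fsubsetP QP tQ vQ.
apply: (conv_hull_fsetD1_beyond_chordE consecutive_orient_neq0) => // p /QP.
  exact: consecutive_wedge_tu.
exact: consecutive_wedge_uv.
Qed.

Lemma L1_beyond_chord w : L1 P w -> w != u -> w != t -> w != v ->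
  0 < orient t u v * orient t v w.
Proof.
move=> Lw wu wt wv; have [tP uP vP] := consecutive_mem; have wP := L1_mem Lw.
apply: beyond_chord_of_not_tri consecutive_orient_neq0
  (consecutive_wedge_tu wP) (consecutive_wedge_uv wP) _.
by move=> /(L1_tri tP uP vP Lw) [] /eqP; rewrite ?(negPf wt) ?(negPf wu) ?(negPf wv).
Qed.

End ConsecutiveVertices.

Section Caratheodory.
Variable R : realType.
Implicit Types (Q S : {fset pt R}) (a b c d p q x y z : pt R).

Lemma ex_argmin_seq (T : eqType) (s : seq T) (F : T -> R) : s != [::] ->
  exists2 j, j \in s & {in s, forall i, F j <= F i}.
Proof.
elim: s => // a [|b s] IH _.
  by exists a; rewrite ?mem_head // => i /[!inE] /eqP ->.
have [j js jmin] := IH isT; have [aj|ja] := leP (F a) (F j).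
  exists a; first exact: mem_head.
  by move=> i /[!inE] /orP[/eqP -> // | /jmin]; apply: le_trans.
exists j; first by rewrite inE js orbT.
by move=> i /[!inE] /orP[/eqP -> | /jmin //]; apply: ltW.
Qed.

Lemma conv_hull_fsetD1_dependence Q (m : pt R -> R) d x : d \in Q -> m d != 0 ->
  (forall f, affine f -> \sum_(p <- Q) m p * f p = 0) ->
  conv_hull Q x -> exists2 j, j \in Q & conv_hull (Q `\ j)%fset x.
Proof.
move=> dQ md m_dep [w [w0 [w1 Ex]]].
have m_sum0 : \sum_(p <- Q) m p = 0.
  by rewrite -[RHS](m_dep _ (affine_cst 1)); apply: eq_bigr => p _; rewrite mulr1.
have [/hasP[p0 p0Q mp0] | /hasPn m_le0] := boolP (has (fun p => 0 < m p) Q); last first.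
  move/eqP: md; case; have : \sum_(p <- Q) - m p == 0 by rewrite sumrN m_sum0 oppr0.
  rewrite big_seq psumr_eq0 => [/allP/(_ d dQ)|p /m_le0]; last by rewrite oppr_ge0 leNgt.
  by rewrite dQ oppr_eq0 => /eqP.
have [|j] := ex_argmin_seq (fun p => w p / m p) (s := [seq p <- Q | 0 < m p]).
  by apply/eqP => /(congr1 (fun s => p0 \in s)); rewrite mem_filter mp0 p0Q.
(* Subtract from w the largest multiple of m keeping the weights nonnegative:
   the weight of j drops to 0. *)
rewrite mem_filter => /andP[mj jQ] jmin; set tau := w j / m j.
pose w' p := w p - tau * m p.
have w'_ge0 : {in Q, forall p, 0 <= w' p}.
  move=> p pQ; rewrite subr_ge0; have [mp|mp] := ltP 0 (m p).
    by rewrite -ler_pdivlMr // jmin // mem_filter mp pQ.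
  by apply: le_trans (w0 p pQ); rewrite mulr_ge0_le0 // divr_ge0 ?w0 ?ltW.
have w'j : w' j = 0 by rewrite /w' /tau divfK ?subrr ?gt_eqF.
have sum_w' f : affine f -> \sum_(p <- (Q `\ j)%fset) w' p * f p = \sum_(p <- Q) w p * f p.
  move=> af; transitivity (\sum_(p <- Q) w' p * f p).
    by rewrite [RHS](big_fsetD1 j jQ) /= w'j mul0r add0r.
  have -> : \sum_(p <- Q) w p * f p =
      \sum_(p <- Q) w p * f p - tau * \sum_(p <- Q) m p * f p.
    by rewrite m_dep // mulr0 subr0.
  rewrite mulr_sumr -sumrB.
  by apply: eq_bigr => p _; rewrite /w'; ring.
exists j => //; exists w'; split; first by move=> p /[!inE] /andP[_ /w'_ge0].
split; last by rewrite Ex !sum_w' //; [exact: affine_snd | exact: affine_fst].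
rewrite -w1 (eq_bigr (fun p => w' p * 1)) => [|p _]; last by rewrite mulr1.
by rewrite sum_w'; [apply: eq_bigr => p _; rewrite mulr1 | exact: affine_cst].
Qed.

(* Cramer's rule: the coefficients of an affine dependence of a, b, c, d. *)
Definition dependence4 a b c d p : R :=
  (p == a)%:R * orient b c d - (p == b)%:R * orient a c d +
  (p == c)%:R * orient a b d - (p == d)%:R * orient a b c.

Lemma dependence4_affine Q a b c d f : a \in Q -> b \in Q -> c \in Q -> d \in Q ->
  affine f -> \sum_(p <- Q) dependence4 a b c d p * f p = 0.
Proof.
move=> aQ bQ cQ dQ [c0 [c1 [c2 E]]].
have -> : \sum_(p <- Q) dependence4 a b c d p * f p =
    \sum_(p <- Q) (p == a)%:R * (f p * orient b c d) -
    \sum_(p <- Q) (p == b)%:R * (f p * orient a c d) +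
    \sum_(p <- Q) (p == c)%:R * (f p * orient a b d) -
    \sum_(p <- Q) (p == d)%:R * (f p * orient a b c).
  by rewrite -sumrB -big_split -sumrB; apply: eq_bigr => p _ /=; rewrite /dependence4; ring.
by rewrite !sum_indicator // !E /orient; ring.
Qed.

Lemma exists_uniq4 Q : (3 < #|` Q|)%N -> exists a b c d,
  [/\ [&& a \in Q, b \in Q, c \in Q & d \in Q] & uniq [:: a; b; c; d]].
Proof.
have memQ p : p \in enum_fset Q -> p \in Q by [].
move: (fset_uniq Q) memQ; case: (enum_fset Q) => [|a [|b [|c [|d s]]]] // U memQ _.
exists a, b, c, d; split; first by rewrite !memQ // !inE eqxx ?orbT.
by move: U; rewrite -[_ :: _]/([:: a; b; c; d] ++ s) cat_uniq => /andP[].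
Qed.

Lemma conv_hull_fsetD1_card Q x : general_position Q -> (3 < #|` Q|)%N ->
  conv_hull Q x -> exists2 j, j \in Q & conv_hull (Q `\ j)%fset x.
Proof.
move=> gp /exists_uniq4 [a [b [c [d [/and4P[aQ bQ cQ dQ]]]]]].
rewrite /= !in_cons in_nil !orbF => /and4P[/norP[ab /norP[ac ad]] /norP[bc bd] cd _].
apply: (@conv_hull_fsetD1_dependence _ (dependence4 a b c d) d) => //.
  rewrite /dependence4 eqxx !(eq_sym d) (negPf ad) (negPf bd) (negPf cd) /=.
  by rewrite !mul0r mul1r subrr add0r sub0r oppr_eq0 gp.
by move=> f; apply: dependence4_affine.
Qed.

Lemma caratheodory Q x : general_position Q -> conv_hull Q x ->
  exists S, [/\ (S `<=` Q)%fset, (#|` S| <= 3)%N & conv_hull S x].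
Proof.
elim: {Q}#|` Q| {-2}Q (leqnn #|` Q|) => [|n IH] Q Qn gp xQ.
  by exists Q; rewrite fsubset_refl (leq_trans Qn).
have [Q3|/(conv_hull_fsetD1_card gp)/(_ xQ) [j jQ xQj]] := leqP #|` Q| 3.
  by exists Q; rewrite fsubset_refl.
have Qj : (#|` (Q `\ j)%fset| <= n)%N by move: Qn; rewrite (cardfsD1 j) jQ.
have gpj := general_position_sub (fsubsetDl Q [fset j]%fset) gp.
have [S [SQ S3 xS]] := IH _ Qj gpj xQj.
by exists S; split => //; apply: fsubset_trans SQ (fsubsetDl _ _).
Qed.

Lemma conv_hull_card_le3 S x : (#|` S| <= 3)%N -> conv_hull S x ->
  exists a b c, [/\ a \in S, b \in S, c \in S, uniq [:: a; b; c] \/ a = b & tri a b c x].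
Proof.
move=> S3 [w [w0 [w1 ->]]].
have memS p : p \in enum_fset S -> p \in S by [].
move: (fset_uniq S) memS w0 w1 S3; case: (enum_fset S) => [|a [|b [|c [|d s]]]] //=;
  rewrite ?big_cons !big_nil ?addr0 => U memS w0 w1 _.
- by move/eqP: w1; rewrite eq_sym oner_eq0.
- have aS : a \in S by rewrite memS ?mem_head.
  exists a, a, a; split; [by [] .. | by right | exists 1, 0, 0].
  by rewrite ler01 lexx w1 !mul0r !addr0 !mul1r; split => //; case: a.
- have [aS bS] : a \in S /\ b \in S by rewrite !memS ?mem_head // !inE eqxx orbT.
  exists a, a, b; split; [by [] .. | by right | exists (w a), 0, (w b)].
  by rewrite lexx !w0 ?addr0 ?mul0r ?addr0.
- have [aS [bS cS]] : [/\ a \in S, b \in S & c \in S].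
    by rewrite !memS ?mem_head // !inE eqxx ?orbT.
  exists a, b, c; split; [by [] .. | by left | ].
  by exists (w a), (w b), (w c); rewrite !w0 // !addrA -(addrA (w a)) w1.
Qed.

Definition tri_index Q : set (pt R * pt R * pt R) := [set i |
  [/\ i.1.1 \in Q, i.1.2 \in Q, i.2 \in Q & orient i.1.1 i.1.2 i.2 != 0 \/ i.1.1 = i.1.2]].

Lemma conv_hull_bigcup Q : general_position Q ->
  conv_hull Q = \bigcup_(i in tri_index Q) tri i.1.1 i.1.2 i.2.
Proof.
move=> gp; apply/seteqP; split => [x | x [[[a b] c] [/= aQ bQ cQ _]]]; last first.
  exact: tri_sub_conv_hull.
move=> /(caratheodory gp) [S [/fsubsetP SQ S3 /(conv_hull_card_le3 S3)]].
move=> [a [b [c [aS bS cS abc xabc]]]]; exists (a, b, c) => //=.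
split; rewrite ?SQ //; case: abc => [|->]; last by right.
rewrite /= !inE !negb_or => /andP[/andP[ab ac] /andP[bc _]].
by left; apply: gp; rewrite ?SQ // ?eq_sym.
Qed.

End Caratheodory.

Section Area.
Variable R : realType.
Implicit Types (Q : {fset pt R}) (a b c p x : pt R) (f : pt R -> R).

Local Notation mu2 := (@lebesgue_measure R \x @lebesgue_measure R)%E.

Lemma measurable_halfplane f : affine f -> measurable [set x : pt R | 0 <= f x].
Proof.
move=> [c0 [c1 [c2 E]]].
have mf : measurable_fun setT (fun x : pt R => c0 + c1 * x.1 + c2 * x.2).
  apply: measurable_funD; [apply: measurable_funD|]; first exact: measurable_cst.
    by apply: measurable_funM; [exact: measurable_cst | exact: measurable_fst].
  by apply: measurable_funM; [exact: measurable_cst | exact: measurable_snd].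
have := mf measurableT _ (measurable_itv `[0, +oo[); rewrite setTI.
by congr measurable; apply/seteqP; split => x /=; rewrite in_itv /= andbT E.
Qed.

Lemma measurable_line a b : measurable [set x : pt R | orient a b x = 0].
Proof.
rewrite (_ : [set x | _] = [set x | 0 <= orient a b x] `&` [set x | 0 <= -1 * orient a b x]).
  apply: measurableI; apply: measurable_halfplane; first exact: affine_orient.
  exact: affineZ (affine_orient a b).
by apply/seteqP; split => x /=; [move=> ->; lra | case; lra].
Qed.

Lemma tri_point a : tri a a a = [set a].
Proof.
apply/seteqP; split => x /=.
  by move=> [al [be [ga [_ _ _ s1 ->]]]]; rewrite -!mulrDl s1 !mul1r; case: a.
by move=> ->; exists 1, 0, 0; rewrite ler01 lexx !mul0r !addr0 !mul1r; case: a.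
Qed.

Lemma tri_segment a b c : orient a b c != 0 ->
  tri a a c = tri a b c `&` [set x | orient c a x = 0].
Proof.
move=> abc; apply/seteqP; split => x /=.
  move=> [al [be [ga [al0 be0 ga0 s1 ->]]]]; split.
    exists (al + be), 0, ga; split; rewrite ?addr_ge0 ?lexx ?addr0 //.
    by rewrite /=; congr (_, _); ring.
  by rewrite (_ : ga = 1 - al - be); [rewrite /orient /=; ring | lra].
move=> [[al [be [ga [al0 be0 ga0 s1 Ex]]]] cax].
have : be * orient a b c = 0.
  by rewrite -[RHS]cax Ex (_ : ga = 1 - al - be); [rewrite /orient /=; ring | lra].
move/eqP; rewrite mulf_eq0 (negPf abc) orbF => /eqP be00.
by subst be; exists al, 0, ga; rewrite Ex !mul0r lexx.
Qed.

Lemma measurable_tri a b c : orient a b c != 0 \/ a = b -> measurable (tri a b c).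
Proof.
have tri_nondeg a' b' c' : orient a' b' c' != 0 -> measurable (tri a' b' c').
  move=> D0; set D := orient a' b' c'.
  have -> : tri a' b' c' = [set x | 0 <= D * orient b' c' x] `&`
      [set x | 0 <= D * orient c' a' x] `&` [set x | 0 <= D * orient a' b' x].
    apply/seteqP; split => x; first by move=> /(tri_orientP x D0) [].
    by move=> [[? ?] ?]; apply/(tri_orientP x D0).
  by do 2?apply: measurableI; apply: measurable_halfplane; apply: affineZ (affine_orient _ _).
case=> [/tri_nondeg // | <-] {b}; have [<-|ac] := eqVneq a c.
  rewrite tri_point (_ : [set a] = [set a.1] `*` [set a.2]).
    by apply: measurableX; exact: measurable_set1.
  by apply/seteqP; split => [x -> | [x1 x2] [/= -> ->]] //; case: a.
(* a point off the line a c: the image of c under the quarter turn about a *)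
pose b := (a.1 - (c.2 - a.2), a.2 + (c.1 - a.1)).
have abc : orient a b c != 0.
  rewrite (_ : orient a b c = - ((c.1 - a.1) ^+ 2 + (c.2 - a.2) ^+ 2)); last first.
    by rewrite /orient /=; ring.
  rewrite oppr_eq0 paddr_eq0 ?sqr_ge0 // !sqrf_eq0 !subr_eq0; apply: contra ac.
  by case: a c {b} => [? ?] [? ?] /andP[/= /eqP-> /eqP->].
by rewrite (tri_segment abc); apply: measurableI; [exact: tri_nondeg | exact: measurable_line].
Qed.

Lemma measurable_conv_hull Q : general_position Q -> measurable (conv_hull Q).
Proof.
move=> gp; rewrite conv_hull_bigcup //; apply: fin_bigcup_measurable.
  apply: (@sub_finite_set _ _ ([set` Q] `*` [set` Q] `*` [set` Q])).
    by move=> [[a b] c] [/= aQ bQ cQ _].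
  by do 2?apply: finite_setX; exact: finite_fset.
by move=> [[a b] c] [/= _ _ _]; exact: measurable_tri.
Qed.

Lemma conv_hull_area_lty Q : general_position Q -> (mu2 (conv_hull Q) < +oo)%E.
Proof.
move=> gp; pose M := \sum_(p <- Q) (`|p.1| + `|p.2|).
have le_M p : p \in Q -> `|p.1| <= M /\ `|p.2| <= M.
  move=> pQ; have pM : `|p.1| + `|p.2| <= M.
    by rewrite /M (big_fsetD1 p pQ) /= lerDl sumr_ge0 // => *; rewrite addr_ge0.
  by split; apply: le_trans pM; rewrite ?lerDl ?lerDr.
pose I := `[- M, M]%classic : set R.
have hull_box : conv_hull Q `<=` I `*` I.
  move=> x xQ; have ge0 (c1 c2 : R) : (forall p, - M <= p.1 <= M -> - M <= p.2 <= M ->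
      0 <= M + c1 * p.1 + c2 * p.2) -> 0 <= M + c1 * x.1 + c2 * x.2.
    move=> H; apply: conv_hull_affine_ge0 (affine_form _ _ _) _ xQ => p /le_M[].
    by rewrite !ler_norml; apply: H.
  have [] : [/\ 0 <= M + 1 * x.1 + 0 * x.2, 0 <= M + -1 * x.1 + 0 * x.2,
      0 <= M + 0 * x.1 + 1 * x.2 & 0 <= M + 0 * x.1 + -1 * x.2].
    by split; apply: ge0 => p /andP[? ?] /andP[? ?]; lra.
  by rewrite /I /= !in_itv /= => *; split; apply/andP; split; lra.
have mI : measurable I by exact: measurable_itv.
have box_le : (mu2 (conv_hull Q) <= mu2 (I `*` I))%E.
  apply: (le_measure mu2) hull_box; rewrite inE.
    exact: measurable_conv_hull.
  exact: measurableX.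
have box_eq : (mu2 (I `*` I) = lebesgue_measure I * lebesgue_measure I)%E.
  exact: product_measure1E.
apply: le_lt_trans box_le _; rewrite box_eq lebesgue_measure_itv /=.
by case: ifP => _; rewrite ?mul0e ?EFinB -?EFinM ?ltry.
Qed.

Lemma area_split (X G : set (pt R)) : measurable X -> measurable G ->
  (mu2 X < +oo)%E -> area X = area (X `\` G) + area (X `&` G).
Proof.
move=> mX mG X_fin; rewrite /area (measureDI mu2 mX mG) fineD //.
  rewrite ge0_fin_numE ?measure_ge0 //; apply: le_lt_trans X_fin.
  by apply: le_measure; rewrite ?inE; [exact: measurableD | exact: mX | move=> ? []].
rewrite ge0_fin_numE ?measure_ge0 //; apply: le_lt_trans X_fin.
by apply: le_measure; rewrite ?inE; [exact: measurableI | exact: mX | move=> ? []].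
Qed.

Lemma sensitivity_restrict Q p (G : set (pt R)) : general_position Q -> measurable G ->
  conv_hull Q `\` G = conv_hull (Q `\ p)%fset `\` G ->
  sensitivity Q p = area (conv_hull Q `&` G) - area (conv_hull (Q `\ p)%fset `&` G).
Proof.
move=> gp mG outside; have gpD := general_position_sub (fsubsetDl Q [fset p]%fset) gp.
rewrite /sensitivity /hull_area.
rewrite (area_split (measurable_conv_hull gp) mG (conv_hull_area_lty gp)).
rewrite (area_split (measurable_conv_hull gpD) mG (conv_hull_area_lty gpD)).
by rewrite outside; ring.
Qed.

End Area.

Theorem lemma1 (R : realType) (P : {fset pt R}) (t u v : pt R) :
  general_position P ->
  consecutive_vertices P t u v ->
  forall w : pt R, L1 P w -> w != u -> w != t -> w != v ->
    sensitivity (P `\ u)%fset w = sensitivity P w.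
Proof.
move=> gp tuv w Lw wu wt wv.
have [tP uP vP] := consecutive_mem tuv.
have [[_ [_ [tu _]]] [[_ [_ [uv _]]] _]] := tuv.
set D := orient t u v; pose G := [set x : pt R | 0 <= D * orient t v x].
have mG : measurable G := measurable_halfplane (affineZ D (affine_orient t v)).
have outside Q : (Q `<=` P)%fset -> t \in Q -> v \in Q ->
    conv_hull Q `\` G = conv_hull (Q `\ w)%fset `\` G.
  move=> QP tQ vQ; rewrite !setDE.
  apply: (consecutive_conv_hull_fsetD1 gp tuv QP tQ vQ (L1_beyond_chord gp tuv Lw wu wt wv)).
  by move=> x /negP; rewrite -ltNge => /ltW.
have inside Q : (Q `<=` P)%fset -> t \in Q -> v \in Q ->
    conv_hull Q `&` G = conv_hull (Q `\ u)%fset `&` G.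
  move=> QP tQ vQ; apply: (consecutive_conv_hull_fsetD1 gp tuv QP tQ vQ (k := - D)).
    rewrite (_ : orient t v u = - D) ?mulrNN ?mulrr_gt0 //; last by rewrite /D /orient; ring.
    exact: consecutive_orient_neq0 gp tuv.
  by move=> x /=; rewrite mulNr oppr_le0.
have gpu := general_position_sub (fsubsetDl P [fset u]%fset) gp.
have [tPu vPu tPw vPw] : [/\ t \in (P `\ u)%fset, v \in (P `\ u)%fset,
    t \in (P `\ w)%fset & v \in (P `\ w)%fset].
  by rewrite !in_fsetD1 tP vP !(eq_sym _ w) wt wv tu eq_sym uv.
rewrite (sensitivity_restrict gp mG (outside P (fsubset_refl P) tP vP)).
rewrite (sensitivity_restrict gpu mG (outside _ (fsubsetDl _ _) tPu vPu)).
rewrite (inside P (fsubset_refl P) tP vP) (inside _ (fsubsetDl _ _) tPw vPw).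
by rewrite !fsetDDl fsetUC.
Qed.
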